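(* Let $G$ be a triangle-free $2$-degenerate graph on $n\ge1$ vertices. Then $\sqrt[n]{\tilde b(G)}\le\Gamma_2$, where $\Gamma_2\approx1.2207$ is the unique root in $[1,2]$ of $x^4-x-1=0$.
   Context: A graph is $2$-degenerate if every induced subgraph has a vertex of degree at most $2$. $\mathrm{Ind}(G)$ is the independence complex of $G$ (including the empty face), and $\tilde b(G)=\sum_{i\ge-1}\dim_{\mathbb{K}}\widetilde H_i(\mathrm{Ind}(G);\mathbb{K})$ for a fixed field $\mathbb{K}$. *)

From HB Require Import structures.
From mathcomp Require Import all_boot all_order all_algebra.
Set Implicit Arguments. Unset Strict Implicit. Unset Printing Implicit Defensive.
Import Order.TTheory GRing.Theory Num.Theory.

Section Graphs.
Variable T : finType.
Variable e : rel T.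

Definition simple_graph : Prop := symmetric e /\ irreflexive e.

Definition triangle_free : Prop :=
  forall x y z : T, ~ [&& e x y, e y z & e x z].

Definition two_degenerate : Prop :=
  forall A : {set T}, A != set0 ->
    exists2 v, v \in A & #|[set u in A | e v u]| <= 2.

Definition independent (S : {set T}) : bool :=
  [forall x in S, forall y in S, ~~ e x y].

(* faces of Ind(G) with exactly k vertices (dimension k-1); k = 0 is the
   empty face *)
Definition faces (k : nat) : {set {set T}} :=
  [set S : {set T} | independent S && (#|S| == k)].

Definition vpos (S : {set T}) (v : T) : nat :=
  #|[set u in S | enum_rank u < enum_rank v]|.

Local Open Scope ring_scope.
Variable K : fieldType.

(* matrix of the (augmented) simplicial boundary map
   C_k(Ind G) -> C_{k-1}(Ind G), from faces with k+1 vertices to faces with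
   k vertices (row-vector convention: rows index the source basis) *)
Definition bd (k : nat) : 'M[K]_(#|faces k.+1|, #|faces k|) :=
  \matrix_(i, j)
    (let S := enum_val (A := faces k.+1) i in
     let R := enum_val (A := faces k) j in
     if R \subset S then \sum_(v in S :\: R) (-1) ^+ vpos S v else 0).

Definition rank_out (k : nat) : nat :=
  if k is k'.+1 then \rank (bd k') else 0%N.

(* dim_K  H~_{k-1}(Ind G; K) = dim ker d_{k-1} - dim im d_k *)
Definition red_betti (k : nat) : nat :=
  (#|faces k| - rank_out k - \rank (bd k))%N.

Definition total_red_betti : nat :=
  (\sum_(k < #|T|.+1) red_betti k)%N.

End Graphs.

(* Write b(A) for the total reduced Betti number of the independence complex
   of the induced subgraph G[A].  For a vertex v of A, the boundary matrices of
   the deletion Ind(G[A - v]) and (up to signs) of the link Ind(G[A - N[v]])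
   are diagonal blocks of a block-triangular submatrix of the boundary matrix
   of Ind(G[A]); comparing ranks gives b(A) <= b(A - v) + b(A - N[v]).  An
   isolated vertex makes Ind(G[A]) a cone, so b(A) = 0, and a vertex whose only
   neighbour is y gives b(A) <= b(A - N[y]).
   In a triangle-free 2-degenerate graph take v of degree at most 2.  Either
   one of these reductions applies, or v has two nonadjacent neighbours a and
   c, each with a further neighbour p and q; splitting at a, v becomes a leaf
   of A - a hanging from c, so b(A) <= b(A - a - N[c]) + b(A - N[a]), where
   the first set misses a, c, v, q and the second a, v, p.  Hence
   b(A) <= G^|A| by induction, since G^(n-4) + G^(n-3) = G^n. *)

From HB Require Import structures.
From mathcomp Require Import all_boot all_order all_algebra.
From mathcomp Require Import zify.
Import Order.TTheory GRing.Theory Num.Theory.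
Set Implicit Arguments. Unset Strict Implicit. Unset Printing Implicit Defensive.
Local Open Scope ring_scope.

Section RankBounds.
Variable K : fieldType.

Lemma mxrank_block_mx_lower m1 m2 n1 n2 (A : 'M[K]_(m1, n1)) (C : 'M[K]_(m2, n1))
    (D : 'M[K]_(m2, n2)) :
  (\rank A + \rank D <= \rank (block_mx A 0 C D))%N.
Proof.
rewrite block_mxEv -addsmxE.
set U := row_mx A 0; set L := row_mx C D.
pose P : 'M[K]_(n1 + n2) := block_mx 0 0 0 1.
have UP : U *m P = 0 by rewrite /U /P mul_row_block !mulmx0 !mul0mx !addr0 row_mx0.
have LP : L *m P = row_mx 0 D by rewrite /L /P mul_row_block !mulmx0 !mulmx1 !addr0 add0r.
have capU : (\rank (U :&: L) <= \rank (L :&: kermx P))%N.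
  by apply: mxrankS; rewrite capmxC; apply: capmxS => //; rewrite sub_kermx UP.
move: capU; have := mxrank_sum_cap U L; have := mxrank_mul_ker L P.
rewrite LP rank_row_0mx /U rank_row_mx0; lia.
Qed.

Lemma mxrank_mxsub m n p q (f : 'I_p -> 'I_m) (g : 'I_q -> 'I_n) (A : 'M[K]_(m, n)) :
  (\rank (mxsub f g A) <= \rank A)%N.
Proof.
have -> : mxsub f g A = rowsub f 1%:M *m (A *m colsub g 1%:M).
  by rewrite mulmx_colsub mulmx1 -mxsub_mul mul1mx.
exact: leq_trans (mxrankM_maxr _ _) (mxrankM_maxl _ _).
Qed.

Lemma mxrank_mxsub_lower m n p1 p2 q1 q2 (A : 'M[K]_(m, n))
    (f1 : 'I_p1 -> 'I_m) (g1 : 'I_q1 -> 'I_n) (f2 : 'I_p2 -> 'I_m) (g2 : 'I_q2 -> 'I_n) :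
  (forall i j, A (f1 i) (g2 j) = 0) ->
  (\rank (mxsub f1 g1 A) + \rank (mxsub f2 g2 A) <= \rank A)%N.
Proof.
move=> A12_0.
pose f i := match split i with inl i1 => f1 i1 | inr i2 => f2 i2 end.
pose g j := match split j with inl j1 => g1 j1 | inr j2 => g2 j2 end.
apply: leq_trans (mxrank_mxsub f g A).
have -> : mxsub f g A = block_mx (mxsub f1 g1 A) 0 (mxsub f2 g1 A) (mxsub f2 g2 A).
  apply/matrixP => i j; rewrite /block_mx !mxE /f /g.
  by case: (split i) => i'; rewrite !mxE; case: (split j) => j'; rewrite !mxE.
exact: mxrank_block_mx_lower.
Qed.

Lemma mxrank_scale_rowcol m n (A : 'M[K]_(m, n)) (a : 'I_m -> K) (b : 'I_n -> K) :
  (\rank (\matrix_(i, j) (a i * A i j * b j)%R) <= \rank A)%N.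
Proof.
have -> : \matrix_(i, j) (a i * A i j * b j)%R =
    diag_mx (\row_i a i) *m A *m diag_mx (\row_j b j).
  by apply/matrixP => i j; rewrite mul_mx_diag mul_diag_mx !mxE.
exact: leq_trans (mxrankM_maxl _ _) (mxrankM_maxr _ _).
Qed.

Lemma mxrank_diagonal n (A : 'M[K]_n) :
  (forall i j, (A i j != 0) = (i == j)) -> \rank A = n.
Proof.
move=> A_diag; apply: mxrank_unit.
have -> : A = diag_mx (\row_i A i i).
  apply/matrixP => i j; rewrite !mxE.
  have [<-|ij] := eqVneq i j; first by rewrite mulr1n.
  by rewrite mulr0n; apply/eqP; rewrite -[_ == 0]negbK A_diag (negPf ij).
rewrite unitmxE det_diag unitfE prodf_seq_neq0; apply/allP => i _ /=.
by rewrite mxE A_diag.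
Qed.

End RankBounds.

Section EnumMap.
Variables (U : finType) (A B : {set U}) (h : U -> U).
Hypothesis hAB : forall x, x \in A -> h x \in B.

Definition enum_map (i : 'I_#|A|) : 'I_#|B| :=
  enum_rank_in (hAB (enum_valP i)) (h (enum_val i)).

Lemma enum_mapE i : enum_val (enum_map i) = h (enum_val i).
Proof. by rewrite /enum_map enum_rankK_in // hAB // enum_valP. Qed.

End EnumMap.

Section ChainComplex.
Variables (T : finType) (K : fieldType).

(* Faces are given by an arbitrary predicate [F]; [faces], [bd] and
   [red_betti] are the instances [F := independent e], up to conversion. *)
Definition facesF (F : pred {set T}) (k : nat) : {set {set T}} :=
  [set S : {set T} | F S && (#|S| == k)].

Definition boundary_mx (A B : {set {set T}}) : 'M[K]_(#|A|, #|B|) :=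
  \matrix_(i, j)
    (let S := enum_val (A := A) i in
     let R := enum_val (A := B) j in
     if R \subset S then \sum_(v in S :\: R) (-1) ^+ vpos S v else 0).

Definition bdF F k := boundary_mx (facesF F k.+1) (facesF F k).

Definition rank_outF F k : nat := if k is k'.+1 then \rank (bdF F k') else 0%N.

Definition red_bettiF F k : nat :=
  (#|facesF F k| - rank_outF F k - \rank (bdF F k))%N.

Definition bettiF F : nat := (\sum_(k < #|T|.+1) red_bettiF F k)%N.

Lemma total_red_betti_bettiF (e : rel T) : total_red_betti e K = bettiF (independent e).
Proof. by []. Qed.

Lemma in_facesF F k S : (S \in facesF F k) = F S && (#|S| == k).
Proof. by rewrite inE. Qed.

Lemma eq_facesF F1 F2 : F1 =1 F2 -> facesF F1 =1 facesF F2.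
Proof. by move=> eqF k; apply/setP => S; rewrite !in_facesF eqF. Qed.

Lemma eq_bettiF F1 F2 : F1 =1 F2 -> bettiF F1 = bettiF F2.
Proof.
move=> eqF; apply: eq_bigr => i _; rewrite /red_bettiF /rank_outF /bdF.
by case: (nat_of_ord i) => [|k]; rewrite !(eq_facesF eqF).
Qed.

End ChainComplex.

Lemma card_setU1_filter (T : finType) (x : T) (S : {set T}) (P : pred T) : x \notin S ->
  #|[set w in x |: S | P w]| = (P x + #|[set w in S | P w]|)%N.
Proof.
move=> xS; case Px: (P x).
  have -> : [set w in x |: S | P w] = x |: [set w in S | P w].
    by apply/setP => w; rewrite !inE; case: eqP => [->|] //=; rewrite Px.
  by rewrite cardsU1 inE (negPf xS).
apply: eq_card => w; rewrite !inE.
by case: eqP => [->|] //=; rewrite Px andbF.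
Qed.

Lemma subset_card_succ (T : finType) (R S : {set T}) k :
  R \subset S -> #|S| = k.+1 -> #|R| = k ->
  exists u, [/\ S :\: R = [set u], u \notin R & S = u |: R].
Proof.
move=> RS cS cR.
have /cards1P [u SRu] : #|S :\: R| == 1%N.
  by rewrite cardsD (setIidPr RS) cS cR subSn // subnn.
have : u \in S :\: R by rewrite SRu set11.
rewrite inE => /andP [uR uS]; exists u; split => //.
apply/setP => x; rewrite !inE; have [->|xu] //= := eqVneq x u.
apply/idP/idP => [xS|/(subsetP RS) //]; apply: contraT => xR.
by move: (xu); rewrite -in_set1 -SRu inE xR xS.
Qed.

Section DeletionLink.
Variables (T : finType) (K : fieldType) (F : pred {set T}) (v : T).

Definition deletion : pred {set T} := fun S => F S && (v \notin S).
Definition link : pred {set T} := fun S => (v \notin S) && F (v |: S).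

Lemma deletion_faces k S : S \in facesF deletion k -> S \in facesF F k.
Proof. by rewrite !in_facesF /deletion => /andP [/andP [-> _] ->]. Qed.

Lemma link_faces k S : S \in facesF link k -> v |: S \in facesF F k.+1.
Proof.
rewrite !in_facesF /link => /andP [/andP [vS ->] /eqP <-].
by rewrite cardsU1 vS add1n eqxx.
Qed.

Lemma card_facesF0 : #|facesF F 0| = #|facesF deletion 0|.
Proof.
apply: eq_card => S; rewrite !in_facesF /deletion cards_eq0.
by case: eqP => [->|]; rewrite ?in_set0 ?andbT ?andbF.
Qed.

Lemma card_facesF_split k :
  #|facesF F k.+1| = (#|facesF deletion k.+1| + #|facesF link k|)%N.
Proof.
rewrite -(cardsID [set S : {set T} | v \in S] (facesF F k.+1)) addnC.
congr (_ + _)%N.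
  congr #|pred_of_set _|; apply/setP => S; rewrite !inE /deletion.
  by case: (F S); case: (v \in S).
have -> : facesF F k.+1 :&: [set S : {set T} | v \in S] = [set v |: S | S in facesF link k].
  apply/setP => S; rewrite !inE; apply/idP/imsetP.
    case/andP => /andP [FS /eqP cS] vS; exists (S :\ v); last by rewrite setD1K.
    rewrite in_facesF /link setD1K // FS !inE eqxx /=.
    by move: cS; rewrite (cardsD1 v S) vS add1n => -[->].
  by case=> R /link_faces; rewrite in_facesF => /andP [FvR cvR] ->; rewrite setU11 FvR cvR.
apply: card_in_imset => R1 R2; rewrite !in_facesF /link.
case/andP => /andP [v1 _] _ /andP [/andP [v2 _] _] E.
by rewrite -(setU1K v1) -(setU1K v2) E.
Qed.

Lemma boundary_deletion k : bdF K deletion k =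
  mxsub (enum_map (@deletion_faces k.+1)) (enum_map (@deletion_faces k)) (bdF K F k).
Proof. by apply/matrixP => i j; rewrite !mxE /= !enum_mapE. Qed.

Lemma boundary_deletion_link k i j :
  bdF K F k.+1 (enum_map (@deletion_faces k.+2) i) (enum_map (@link_faces k) j) = 0.
Proof.
rewrite !mxE /= !enum_mapE.
have := enum_valP i; rewrite in_facesF /deletion => /andP [/andP [_ vS] _].
by case: ifP => // /subsetP/(_ v (setU11 _ _)); rewrite (negPf vS).
Qed.

(* Adding [v] to a face shifts by one the position of every vertex after [v],
   so the boundary of the link is the corresponding block of the boundary of
   [F] conjugated by a diagonal sign matrix. *)
Definition shift_sign (S : {set T}) : K :=
  (-1) ^+ #|[set w in S | (enum_rank v < enum_rank w)%N]|.

Lemma boundary_link k : bdF K link k =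
  \matrix_(i, j) (shift_sign (enum_val i) *
     mxsub (enum_map (@link_faces k.+1)) (enum_map (@link_faces k)) (bdF K F k.+1) i j
     * shift_sign (enum_val j))%R.
Proof.
apply/matrixP => i j; rewrite !mxE /= !enum_mapE.
set S := enum_val i; set R := enum_val j.
have := enum_valP i; rewrite in_facesF /link -/S => /andP [/andP [vS _] /eqP cS].
have := enum_valP j; rewrite in_facesF /link -/R => /andP [/andP [vR _] /eqP cR].
have -> : (v |: R \subset v |: S) = (R \subset S).
  apply/idP/idP => [/subsetP vRS|]; last exact: setUS.
  apply/subsetP => x xR; case/setU1P: (vRS x (setU1r v xR)) => [xv|//].
  by move: xR; rewrite xv (negPf vR).
have -> : (v |: S) :\: (v |: R) = S :\: R.
  by apply/setP => x; rewrite !inE; case: eqP => [->|] //=; rewrite (negPf vS) andbF.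
case: ifP => RS; last by rewrite mulr0 mul0r.
have [u [SRu uR SE]] := subset_card_succ RS cS cR.
rewrite SRu !big_set1 /vpos card_setU1_filter // exprD.
have -> : shift_sign S = (-1) ^+ (enum_rank v < enum_rank u)%N * shift_sign R.
  by rewrite /shift_sign SE card_setU1_filter // exprD.
by rewrite /shift_sign mulrACA -expr2 sqrr_sign mul1r mulrC mulrA -expr2 sqrr_sign mul1r.
Qed.

Lemma mxrank_boundary_split k :
  (\rank (bdF K deletion k) + rank_outF K link k <= \rank (bdF K F k))%N.
Proof.
case: k => [|k] /=; first by rewrite addn0 boundary_deletion mxrank_mxsub.
rewrite boundary_deletion boundary_link.
apply: leq_trans _ (mxrank_mxsub_lower (enum_map (@deletion_faces k.+1))
  (enum_map (@link_faces k.+1)) (@boundary_deletion_link k)).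
by rewrite leq_add2l mxrank_scale_rowcol.
Qed.

Lemma bettiF_deletion_link : (bettiF K F <= bettiF K deletion + bettiF K link)%N.
Proof.
rewrite /bettiF big_ord_recl [X in (_ <= X + _)%N]big_ord_recl.
rewrite [X in (_ <= _ + X)%N]big_ord_recr /=.
have le0 : (red_bettiF K F 0 <= red_bettiF K deletion 0)%N.
  rewrite /red_bettiF /= !subn0.
  by have := card_facesF0; have := mxrank_boundary_split 0; rewrite /= addn0; lia.
have leS (i : 'I_#|T|) :
    (red_bettiF K F (bump 0 i) <= red_bettiF K deletion (bump 0 i) + red_bettiF K link i)%N.
  rewrite /red_bettiF /bump /= add1n add0n; have := card_facesF_split i.
  have := mxrank_boundary_split i.+1; have := mxrank_boundary_split i; rewrite /=; lia.
have : (\sum_(i < #|T|) red_bettiF K F (bump 0 i) <= \sum_(i < #|T|)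
    (red_bettiF K deletion (bump 0 i) + red_bettiF K link i))%N.
  by apply: leq_sum => i _; apply: leS.
rewrite big_split /=; lia.
Qed.

Section Cone.
Hypothesis cone : forall S : {set T}, v \notin S -> F (v |: S) = F S.

Lemma link_cone : link =1 deletion.
Proof.
move=> S; rewrite /link /deletion andbC.
by case: (boolP (v \in S)) => vS; rewrite ?andbF // cone.
Qed.

Lemma cone_faces k S : S \in facesF deletion k -> v |: S \in facesF F k.+1.
Proof. by rewrite -(eq_facesF link_cone); apply: link_faces. Qed.

(* The faces [v |: S] and [S] pair up into a diagonal block of the boundary. *)
Lemma mxrank_boundary_cone k : (#|facesF deletion k| <= \rank (bdF K F k))%N.
Proof.
rewrite -[X in (X <= _)%N](@mxrank_diagonal K _
   (mxsub (enum_map (@cone_faces k)) (enum_map (@deletion_faces k)) (bdF K F k))).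
  exact: mxrank_mxsub.
move=> i j; rewrite !mxE /= !enum_mapE.
have := enum_valP i; rewrite in_facesF /deletion => /andP [/andP [_ vS] /eqP cS].
have := enum_valP j; rewrite in_facesF /deletion => /andP [/andP [_ vR] /eqP cR].
have [<-|ij] := eqVneq i j.
  rewrite subsetUr setDUl setDv setU0 (setDidPl _) ?big_set1 ?signr_eq0 //.
  by rewrite disjoints1.
case: ifP => RS; last by rewrite eqxx.
case/eqP: ij; apply: enum_val_inj; apply/eqP; rewrite eq_sym eqEcard cS cR leqnn andbT.
apply/subsetP => x xR; case/setU1P: (subsetP RS x xR) => [xv|//].
by move: xR; rewrite xv (negPf vR).
Qed.

Lemma bettiF_cone : bettiF K F = 0%N.
Proof.
apply: big1 => i _; apply/eqP; rewrite /red_bettiF subn_eq0.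
case: (nat_of_ord i) => [|k] /=.
  by rewrite subn0 [X in (X <= _)%N]card_facesF0 mxrank_boundary_cone.
rewrite leq_subLR [X in (X <= _)%N]card_facesF_split addnC (eq_facesF link_cone).
by rewrite leq_add ?mxrank_boundary_cone.
Qed.

End Cone.

End DeletionLink.

Section IndependenceComplex.
Variables (T : finType) (K : fieldType) (e : rel T).
Hypotheses (e_sym : symmetric e) (e_irr : irreflexive e).

Lemma independentP (S : {set T}) :
  reflect {in S &, forall x y, ~~ e x y} (independent e S).
Proof.
apply: (iffP forall_inP) => [indS x y xS yS|indS x xS].
  by have /forall_inP := indS x xS; apply.
by apply/forall_inP => y yS; apply: indS.
Qed.

Lemma independentU1 (v : T) (S : {set T}) :
  independent e (v |: S) = independent e S && [forall u in S, ~~ e v u].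
Proof.
apply/independentP/andP => [indvS|[/independentP indS /forall_inP vS]].
  split; last by apply/forall_inP => u uS; apply: indvS; rewrite !inE ?eqxx ?uS ?orbT.
  by apply/independentP => x y xS yS; apply: indvS; rewrite inE ?xS ?yS orbT.
move=> x y /setU1P [->|xS] /setU1P [->|yS]; rewrite ?e_irr //; last exact: indS.
- exact: vS.
- by rewrite e_sym vS.
Qed.

Definition ind_on (A : {set T}) : pred {set T} :=
  fun S => independent e S && (S \subset A).

Definition betti_on (A : {set T}) : nat := bettiF K (ind_on A).

Lemma total_red_betti_betti_on : total_red_betti e K = betti_on setT.
Proof.
by rewrite total_red_betti_bettiF; apply: eq_bettiF => S; rewrite /ind_on subsetT andbT.
Qed.

Definition nbhd (v : T) : {set T} := v |: [set u | e v u].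

Definition nbrs (A : {set T}) (v : T) : {set T} := [set u in A | e v u].

Lemma in_nbrs (A : {set T}) x u : (u \in nbrs A x) = (u \in A) && e x u.
Proof. by rewrite inE. Qed.

Lemma subsetD_nbhd (S A : {set T}) (v : T) :
  (S \subset A :\: nbhd v) = [&& v \notin S, [forall u in S, ~~ e v u] & S \subset A].
Proof.
apply/subsetP/and3P => [SAv|[vS /forall_inP nvS /subsetP SA] x xS].
  split; first by apply/negP => /SAv; rewrite !inE eqxx.
    by apply/forall_inP => u /SAv; rewrite !inE negb_or => /andP [/andP []].
  by apply/subsetP => x /SAv /setDP [].
rewrite !inE SA // andbT negb_or nvS // andbT.
by apply: contraNneq vS => <-.
Qed.

Lemma deletion_ind_on (A : {set T}) v : deletion (ind_on A) v =1 ind_on (A :\ v).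
Proof.
move=> S; rewrite /deletion /ind_on -andbA; congr (_ && _).
apply/andP/subsetP => [[/subsetP SA vS] x xS|SAv].
  by rewrite !inE SA ?andbT //; apply: contraNneq vS => <-.
split; first by apply/subsetP => x /SAv /setD1P [].
by apply/negP => /SAv; rewrite !inE eqxx.
Qed.

Lemma link_ind_on (A : {set T}) v : v \in A -> link (ind_on A) v =1 ind_on (A :\: nbhd v).
Proof.
move=> vA S; rewrite /link /ind_on subsetD_nbhd independentU1 subUset sub1set vA /=.
by case: (v \in S); rewrite ?andbF //= andbA.
Qed.

Lemma betti_on_split (A : {set T}) v : v \in A ->
  (betti_on A <= betti_on (A :\ v) + betti_on (A :\: nbhd v))%N.
Proof.
move=> vA; rewrite /betti_on -(eq_bettiF K (deletion_ind_on A v)).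
by rewrite -(eq_bettiF K (link_ind_on vA)); apply: bettiF_deletion_link.
Qed.

Lemma betti_on_isolated (A : {set T}) v : v \in A -> nbrs A v = set0 -> betti_on A = 0%N.
Proof.
move=> vA /setP Nv0; apply: (@bettiF_cone _ _ _ v) => S vS.
rewrite /ind_on independentU1 subUset sub1set vA /= -andbA; congr (_ && _).
case SA: (S \subset A); rewrite ?andbF ?andbT //.
apply/forall_inP => u uS; move: (Nv0 u); rewrite !inE (subsetP SA) //=.
by move=> ->.
Qed.

Lemma betti_on_set0 : (betti_on set0 <= 1)%N.
Proof.
have le_card k : (red_bettiF K (ind_on set0) k <= #|facesF (ind_on set0) k|)%N.
  exact: leq_trans (leq_subr _ _) (leq_subr _ _).
rewrite /betti_on /bettiF big_ord_recl big1 => [|i _].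
  rewrite addn0 (leq_trans (le_card 0%N)) // -(cards1 (set0 : {set T})).
  by apply/subset_leq_card/subsetP => S; rewrite !inE cards_eq0 andbC => /andP [].
apply/eqP; rewrite -leqn0 (leq_trans (le_card _)) // leqn0 cards_eq0.
apply/eqP/setP => S; rewrite !inE /ind_on subset0.
by case: eqP => [->|]; rewrite ?cards0 ?andbF.
Qed.

(* Splitting at [y], the deletion term vanishes: [x] is isolated in [A :\ y]. *)
Lemma betti_on_pendant (A : {set T}) x y : x \in A -> nbrs A x = [set y] ->
  (betti_on A <= betti_on (A :\: nbhd y))%N.
Proof.
move=> xA Nx; have : y \in nbrs A x by rewrite Nx set11.
rewrite in_nbrs => /andP [yA exy].
apply: leq_trans (betti_on_split yA) _.
rewrite (@betti_on_isolated (A :\ y) x) //.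
  by rewrite !inE xA andbT; apply: contraTneq exy => ->; rewrite e_irr.
apply/setP => u; move/setP/(_ u): Nx; rewrite !inE => Nxu.
by rewrite -andbA Nxu andNb.
Qed.

End IndependenceComplex.

Lemma cardsD_add_uniq (T : finType) (A B : {set T}) (s : seq T) :
  uniq s -> {subset s <= A :&: B} -> (#|A :\: B| + size s <= #|A|)%N.
Proof.
move=> /card_uniqP s_size /subsetP sAB.
have := subset_leq_card sAB; have := subset_leq_card (subsetIl A B).
by rewrite cardsD s_size; lia.
Qed.

Lemma set1_or_other (T : finType) (X : {set T}) v :
  v \in X -> X = [set v] \/ exists2 p, p \in X & p != v.
Proof.
move=> vX; have [/existsP [p /andP [pX pv]]|noother] := boolP [exists p, (p \in X) && (p != v)].
  by right; exists p.
left; apply/setP => p; rewrite inE; apply/idP/eqP => [pX|->//].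
by apply/eqP; apply: contraNT noother => pv; apply/existsP; exists p; rewrite pX.
Qed.

Section TwoDegenerate.
Variables (T : finType) (K : fieldType) (e : rel T).
Hypotheses (e_sym : symmetric e) (e_irr : irreflexive e).
Hypotheses (e_tf : triangle_free e) (e_deg : two_degenerate e).

Local Notation b := (betti_on K e).

Lemma betti_on_pendant_decrease (A : {set T}) x y : x \in A -> nbrs e A x = [set y] ->
  exists2 B : {set T}, (#|B| < #|A|)%N & (b A <= b B)%N.
Proof.
move=> xA Nx; exists (A :\: nbhd e y); last exact: (betti_on_pendant K e_sym e_irr xA Nx).
have : y \in nbrs e A x by rewrite Nx set11.
rewrite in_nbrs => /andP [yA _].
have := @cardsD_add_uniq _ A (nbhd e y) [:: y] isT.
by rewrite /= addn1; apply=> u; rewrite inE => /eqP ->; rewrite !inE yA eqxx.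
Qed.

Lemma betti_on_path_split (A : {set T}) v a c p q :
  v \in A -> nbrs e A v = [set a; c] -> a != c ->
  p \in nbrs e A a -> p != v -> q \in nbrs e A c -> q != v ->
  exists B1 B2 : {set T}, [/\ (#|B1| + 4 <= #|A|)%N, (#|B2| + 3 <= #|A|)%N
                  & (b A <= b B1 + b B2)%N].
Proof.
move=> vA Nv ac; rewrite !in_nbrs => /andP [pA eap] pv /andP [qA ecq] qv.
have /andP [aA eva] : (a \in A) && e v a by rewrite -in_nbrs Nv !inE eqxx.
have /andP [cA evc] : (c \in A) && e v c by rewrite -in_nbrs Nv !inE eqxx orbT.
have neq_irr x y : e x y -> x != y by apply: contraTneq => ->; rewrite e_irr.
have va := neq_irr _ _ eva; have vc := neq_irr _ _ evc.
have nac : ~~ e a c by apply/negP => eac; apply: (e_tf (x := v) (y := a) (z := c)); rewrite eva eac.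
have qa : q != a by apply: contraNneq nac => <-; rewrite e_sym.
have Nv' : nbrs e (A :\ a) v = [set c].
  apply/setP => u; move/setP/(_ u): Nv; rewrite !inE => Nvu.
  by rewrite -andbA Nvu; case: eqP => [->|] //=; rewrite (negPf ac).
exists ((A :\ a) :\: nbhd e c), (A :\: nbhd e a); split.
- have : (#|(A :\ a) :\: nbhd e c| + size [:: c; v; q] <= #|A :\ a|)%N.
    apply: cardsD_add_uniq.
      by rewrite /= !inE !negb_or eq_sym vc (neq_irr _ _ ecq) eq_sym qv.
    move=> x; rewrite !inE => /or3P [] /eqP ->.
    + by rewrite eqxx eq_sym ac cA.
    + by rewrite e_sym evc va vA orbT.
    + by rewrite ecq qa qA orbT.
  have cardA : #|A| = (#|A :\ a|).+1 by rewrite (cardsD1 a A) aA add1n.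
  by rewrite cardA addnS ltnS.
- have : (#|A :\: nbhd e a| + size [:: a; v; p] <= #|A|)%N.
    apply: cardsD_add_uniq.
      by rewrite /= !inE !negb_or eq_sym va (neq_irr _ _ eap) eq_sym pv.
    move=> x; rewrite !inE => /or3P [] /eqP ->.
    + by rewrite eqxx aA.
    + by rewrite e_sym eva vA orbT.
    + by rewrite eap pA orbT.
  by [].
- apply: leq_trans (betti_on_split K e_sym e_irr aA) _.
  by rewrite leq_add2r; apply: (betti_on_pendant K e_sym e_irr _ Nv'); rewrite !inE vA va.
Qed.

Lemma betti_on_decrease (A : {set T}) : A != set0 ->
  (exists2 B : {set T}, (#|B| < #|A|)%N & (b A <= b B)%N) \/
  (exists B1 B2 : {set T}, [/\ (#|B1| + 4 <= #|A|)%N, (#|B2| + 3 <= #|A|)%N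
                             & (b A <= b B1 + b B2)%N]).
Proof.
move=> A0; have [v vA] := e_deg A0; rewrite -/(nbrs e A v).
rewrite leq_eqVlt ltnS leq_eqVlt ltnS leqn0 cards_eq0.
case/or3P => [/cards2P [a [c [ac Nv]]]|/cards1P [w Nw]|/eqP Nv0]; first last.
- left; exists (A :\ v); first by rewrite (cardsD1 v A) vA.
  by rewrite (betti_on_isolated K e_sym e_irr vA Nv0).
- by left; apply: betti_on_pendant_decrease vA Nw.
have pendant_or_other u : u \in nbrs e A v ->
    (exists2 B : {set T}, (#|B| < #|A|)%N & (b A <= b B)%N) \/
    exists2 p, p \in nbrs e A u & p != v.
  rewrite in_nbrs => /andP [uA evu].
  have vNu : v \in nbrs e A u by rewrite in_nbrs vA e_sym.
  case: (set1_or_other vNu) => [Nu|]; last by right.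
  by left; apply: betti_on_pendant_decrease uA Nu.
have aN : a \in nbrs e A v by rewrite Nv set21.
have cN : c \in nbrs e A v by rewrite Nv set22.
have [|[p pa pv]] := pendant_or_other a aN; first by left.
have [|[q qc qv]] := pendant_or_other c cN; first by left.
by right; apply: betti_on_path_split vA Nv ac pa pv qc qv.
Qed.

Lemma betti_on_le_expr (R : realDomainType) (G : R) :
  1 <= G -> G ^+ 4 = G + 1 -> forall A : {set T}, (b A)%:R <= G ^+ #|A|.
Proof.
move=> G1 G4 A; have [n ltAn] := ubnP #|A|; elim: n A ltAn => // n IH A /ltnSE cardA.
have [->|A0] := eqVneq A set0; first by rewrite cards0 expr0 lern1 betti_on_set0.
case: (betti_on_decrease A0) => [[B ltBA bAB]|[B1 [B2 [le1 le2 bAB]]]].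
  apply: le_trans (_ : (b B)%:R <= _); first by rewrite ler_nat.
  by apply: le_trans (IH B _) (ler_weXn2l G1 (ltnW ltBA)); lia.
have [k Ak] : exists k, #|A| = (k + 4)%N by exists (#|A| - 4)%N; lia.
rewrite Ak exprD G4 mulrDr mulr1 -exprSr.
apply: le_trans (_ : (b B1 + b B2)%:R <= _); first by rewrite ler_nat.
rewrite natrD addrC; apply: lerD.
  by apply: le_trans (IH B2 _) (ler_weXn2l G1 _); lia.
by apply: le_trans (IH B1 _) (ler_weXn2l G1 _); lia.
Qed.

End TwoDegenerate.

(* Imported only now: [classical_sets] shadows finset names such as [setIidPr]. *)
From mathcomp Require Import all_classical all_reals all_analysis.

Theorem proposition6p4 (K : fieldType) (T : finType) (e : rel T)
  (Hsimple : simple_graph e) (Hn : (1 <= #|T|)%N)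
  (Htf : triangle_free e) (Hdeg : two_degenerate e)
  (R : realType) (Gamma2 : R)
  (HG1 : (1 <= Gamma2)%R) (HG2 : (Gamma2 <= 2)%R)
  (HGroot : (Gamma2 ^+ 4 - Gamma2 - 1 = 0)%R) :
  ((total_red_betti e K)%:R `^ (#|T|%:R^-1) <= Gamma2)%R.
Proof.
case: Hsimple => e_sym e_irr.
have G4 : Gamma2 ^+ 4 = Gamma2 + 1 by apply/eqP; rewrite -subr_eq0 opprD addrA HGroot.
have := betti_on_le_expr K e_sym e_irr Htf Hdeg HG1 G4 (setTfor T).
rewrite cardsT -total_red_betti_betti_on => le_betti.
have G0 : 0 <= Gamma2 by apply: le_trans HG1.
have n0 : (#|T|%:R : R) != 0 by rewrite pnatr_eq0 -lt0n.
apply: le_trans (_ : (Gamma2 ^+ #|T|) `^ (#|T|%:R^-1) <= _).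
  by apply: ge0_ler_powR; rewrite ?invr_ge0 ?nnegrE ?exprn_ge0 ?ler0n.
by rewrite -powR_mulrn // -powRrM mulfV // powRr1.
Qed.
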